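(* In the setting described in the context, let $\mathcal{Y}$ be a representative set with function $A$ and projector $P$, let $\nu=P_\sharp\mu_A$, and let $g\in\mathcal{G}$ with $\int A\circ g\,d\mu<\infty$. Let $g_\star\nu:=P_\sharp\big((g_\sharp\mu)_A\big)$ be the normalized measure associated (in the same way as $\nu$ is associated with $\mu$) with the invariant measure $g_\sharp\mu$. Then $$g_\star\nu=(P\circ g)_\sharp\,\nu_C,\qquad C=A\circ g,$$ where $\nu_C$ is the probability measure on $\mathcal{Y}$ with $d\nu_C/d\nu=C/\int C\,d\nu$.
   Context: Let $(\mathcal{X},\Sigma)$ be a measurable space. A flow on $\mathcal{X}$ is a family $(\Phi^t)_{t\in\mathbb{R}}$ of bijective measurable maps $\mathcal{X}\to\mathcal{X}$ with $\Phi^{t_1}\circ\Phi^{t_2}=\Phi^{t_1+t_2}$, such that $(x,t)\mapsto\Phi^t(x)$ is measurable. $f_\sharp\rho=\rho\circ f^{-1}$ denotes push-forward. A probability measure $\rho$ is invariant if $\Phi^t_\sharp\rho=\rho$ for all $t$. Fix a flow $\Phi^t$ and an invariant probability measure $\mu$ on $\mathcal{X}$. Let $h^a$, $a>0$, be bijective measurable maps of $\mathcal{X}$ and $\mathcal{G}$ a group (under composition) of bijective measurable maps of $\mathcal{X}$ such that for all $a,a_1,a_2>0$, $t\in\mathbb{R}$, $g\in\mathcal{G}$: $h^{a_1}\circ h^{a_2}=h^{a_1a_2}$, $\Phi^t\circ g=g\circ\Phi^t$, $g\circ h^a=h^a\circ g$, $\Phi^t\circ h^a=h^a\circ\Phi^{t/a}$.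 (Then $g_\sharp\mu$ is again invariant.) A set $\mathcal{Y}\subset\mathcal{X}$ is a representative set if for every $x$ there is a unique $a=A(x)>0$ with $h^a(x)\in\mathcal{Y}$, with $A:\mathcal{X}\to(0,\infty)$ measurable and $\int A\,d\mu<\infty$; the projector is $P(x)=h^{A(x)}(x)$. For a measure $\rho$ and positive measurable $B$ with $0<\int B\,d\rho<\infty$, $\rho_B$ is the probability measure with $d\rho_B/d\rho=B/\int B\,d\rho$. *)

From HB Require Import structures.
From mathcomp Require Import all_boot all_order all_algebra.
From mathcomp Require Import all_classical all_reals all_analysis.
Set Implicit Arguments. Unset Strict Implicit. Unset Printing Implicit Defensive.
Import Order.TTheory GRing.Theory Num.Theory.
Local Open Scope classical_set_scope.
Local Open Scope ring_scope.

(* rho_B : the measure with d rho_B / d rho = B / \int B d rho.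
   Stated on (raw) set functions; meaningful when 0 < \int B d rho < +oo. *)
Definition normalized d (X : measurableType d) (R : realType)
  (rho : set X -> \bar R) (B : X -> R) : set X -> \bar R :=
  fun S => ((\int[rho]_(x in S) (B x)%:E) *
            ((fine (\int[rho]_x (B x)%:E))^-1)%:E)%E.

From HB Require Import structures.
From mathcomp Require Import all_boot all_order all_algebra.
From mathcomp Require Import all_classical all_reals all_analysis.
From mathcomp Require Import measurable_realfun.
Set Implicit Arguments.
Unset Strict Implicit.
Unset Printing Implicit Defensive.
Import Order.TTheory GRing.Theory Num.Theory.
Local Open Scope classical_set_scope.
Local Open Scope ring_scope.

(* The projector P is constant along the orbits of the h^a, along which A is
   rescaled: A (h^a y) = A y / a.  Since g commutes with every h^a, this gives
   P o g o P = P o g and the cocycle identity  A (g (P x)) * A x = A (g x).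
   Changing variables for the push-forward by P and for the density A then gives
     \int_D A o g dnu = \int_(P^-1 D) A o g dmu / \int A dmu,
   so that both (P o g)_# nu_C and P_# ((g_# mu)_A) map S to
     \int_(g^-1 P^-1 S) A o g dmu / \int A o g dmu. *)

Definition density d (T : measurableType d) (R : realType)
    (mu : {measure set T -> \bar R}) (f : T -> R)
    of mu.-integrable setT (EFin \o f) & (forall x, 0 <= f x) :
  set T -> \bar R :=
  fun S => (\int[mu]_(x in S) (f x)%:E)%E.

Section density_measure.
Local Open Scope ereal_scope.
Context d (T : measurableType d) (R : realType).
Variable mu : {measure set T -> \bar R}.
Variables (f : T -> R) (intf : mu.-integrable setT (EFin \o f))
  (f0 : forall x, (0 <= f x)%R).
Local Notation fmu := (density intf f0).

Let density0 : fmu set0 = 0.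
Proof. exact: integral_set0. Qed.

Let density_ge0 S : 0 <= fmu S.
Proof. by apply: integral_ge0 => x _; rewrite lee_fin. Qed.

Let density_sigma_additive : semi_sigma_additive fmu.
Proof.
apply: semi_sigma_additive_nng_induced; first exact: measurable_int intf.
by move=> x; rewrite lee_fin.
Qed.

HB.instance Definition _ := isMeasure.Build _ _ _ fmu
  density0 density_ge0 density_sigma_additive.

Let density_fin_num : fin_num_fun fmu.
Proof.
by move=> S mS; apply: integrable_fin_num => //; exact: integrableS intf.
Qed.

HB.instance Definition _ := Measure_isFinite.Build _ _ _ fmu density_fin_num.

Lemma density_dominates : fmu `<< mu.
Proof.
apply/null_content_dominatesP => S mS muS0; apply: null_set_integral => //.
exact/measurable_funTS/(measurable_int mu intf).
Qed.

End density_measure.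

Section integral_density.
Local Open Scope ereal_scope.
Context d (T : measurableType d) (R : realType).
Variables (mu : {sigma_finite_measure set T -> \bar R}) (f : T -> R)
  (intf : mu.-integrable setT (EFin \o f)) (f0 : forall x, (0 <= f x)%R).
Local Notation fmu := (density intf f0).
Local Notation RN := (Radon_Nikodym_SigmaFinite.f fmu mu).

Lemma ae_eq_Radon_Nikodym_density : ae_eq mu setT RN (EFin \o f).
Proof.
have fmu_mu := density_dominates intf f0.
apply: integral_ae_eq => //.
- exact: Radon_Nikodym_SigmaFinite.f_integrable.
- exact: measurable_int intf.
- by move=> E _ mE; rewrite -Radon_Nikodym_SigmaFinite.f_integral.
Qed.

Lemma integral_density (F : T -> \bar R) E : (forall x, 0 <= F x) ->
    measurable E -> measurable_fun E F ->
  \int[fmu]_(x in E) F x = \int[mu]_(x in E) (F x * (f x)%:E).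
Proof.
move=> F0 mE mF; have fmu_mu := density_dominates intf f0.
rewrite -(Radon_Nikodym_SigmaFinite.change_of_variables fmu_mu)//.
apply: ae_eq_integral => //.
- apply: emeasurable_funM => //; apply: measurable_funTS.
  exact: measurable_int (Radon_Nikodym_SigmaFinite.f_integrable _).
- exact/emeasurable_funM/measurable_funTS/(measurable_int _ intf).
- exact/ae_eqe_mul2l/(ae_eq_subset (subsetT E))/ae_eq_Radon_Nikodym_density.
Qed.

End integral_density.

Lemma integral_gt0 d (T : measurableType d) (R : realType)
    (mu : {measure set T -> \bar R}) (f : T -> R) :
  mu setT != 0 -> measurable_fun setT f -> (forall x, 0 < f x) ->
  (0 < \int[mu]_x (f x)%:E)%E.
Proof.
move=> mu_neq0 mf f_gt0.
have mfE : measurable_fun setT (EFin \o f) by exact/measurable_EFinP.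
rewrite lt_neqAle integral_ge0 ?andbT; last by move=> x _; rewrite lee_fin ltW.
apply/eqP => int0.
have : (\int[mu]_x `|(f x)%:E| = 0)%E.
  by rewrite int0; apply: eq_integral => x _; rewrite gee0_abs// lee_fin ltW.
case/(ae_eq_integral_abs mu measurableT mfE) => N [mN muN0 fN].
have TN : setT `<=` N.
  by move=> x _; apply: fN => /= /(_ I) /eqP; rewrite eqe gt_eqF.
apply/negP: mu_neq0; rewrite -measure_le0.
have /le_trans -> // := le_measure mu (mem_set measurableT) (mem_set mN) TN.
by rewrite measure_le0; apply/eqP.
Qed.

Lemma measurable_preimage d1 d2 (T1 : measurableType d1)
    (T2 : measurableType d2) (f : T1 -> T2) S :
  measurable_fun setT f -> measurable S -> measurable (f @^-1` S).
Proof. by move=> mf mS; rewrite -[_ @^-1` _]setTI; exact: mf. Qed.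

Section integral_normalized.
Local Open Scope ereal_scope.
Context d d' (T : measurableType d) (T' : measurableType d') (R : realType).
Variables (mu : {sigma_finite_measure set T -> \bar R}) (f : T -> R)
  (intf : mu.-integrable setT (EFin \o f)) (f0 : forall x, (0 <= f x)%R).

Lemma integral_pushforward_normalized (phi : T -> T') (F : T' -> \bar R) D :
    measurable_fun setT phi -> measurable D -> measurable_fun D F ->
    (forall y, 0 <= F y) ->
  \int[pushforward (normalized mu f) phi]_(y in D) F y =
  ((fine (\int[mu]_x (f x)%:E))^-1)%:E *
    \int[mu]_(x in phi @^-1` D) (F (phi x) * (f x)%:E).
Proof.
move=> mphi mD mF F0.
have k0 : (0 <= (fine (\int[mu]_x (f x)%:E))^-1)%R.
  by rewrite invr_ge0 fine_ge0// integral_ge0// => x _; rewrite lee_fin.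
have -> : normalized mu f = mscale (NngNum k0) (density intf f0).
  by apply/funext => S; rewrite /normalized /mscale muleC.
have mphiD := measurable_preimage mphi mD.
have mFphi : measurable_fun (phi @^-1` D) (F \o phi).
  by apply: measurable_comp mD _ mF (measurable_funTS mphi) => _ [x Dx <-].
rewrite ge0_integral_pushforward// ge0_integral_mscale//; last first.
  by move=> x _; exact: F0.
by congr (_ * _); apply: integral_density => // x; exact: F0.
Qed.

End integral_normalized.

Definition projector (R : numFieldType) (X : Type) (h : R -> X -> X)
  (A : X -> R) (x : X) : X := h (A x) x.

Section representative_set.
Variables (R : numFieldType) (X : Type) (h : R -> X -> X) (Y : set X).
Variable A : X -> R.
Hypotheses
  (h_mul : forall a1 a2, 0 < a1 -> 0 < a2 -> h a1 \o h a2 = h (a1 * a2))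
  (A_gt0 : forall x, 0 < A x) (A_rep : forall x, Y (h (A x) x))
  (A_uniq : forall x a, 0 < a -> Y (h a x) -> a = A x).
Local Notation P := (projector h A).

Lemma hM a1 a2 y : 0 < a1 -> 0 < a2 -> h a1 (h a2 y) = h (a1 * a2) y.
Proof. by move=> a1_gt0 a2_gt0; rewrite -(h_mul a1_gt0 a2_gt0). Qed.

Lemma A_h b y : 0 < b -> A (h b y) = A y / b.
Proof.
move=> b_gt0; have Ab_gt0 : 0 < A y / b by rewrite divr_gt0.
by apply/esym/A_uniq => //; rewrite hM// divfK ?gt_eqF.
Qed.

Lemma projector_h a y : 0 < a -> P (h a y) = P y.
Proof.
by move=> a_gt0; rewrite /projector A_h// hM ?divr_gt0// divfK ?gt_eqF.
Qed.

Variable g : X -> X.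
Hypothesis g_h : forall a, 0 < a -> g \o h a = h a \o g.

Lemma g_hE a y : 0 < a -> g (h a y) = h a (g y).
Proof. by move=> a_gt0; rewrite -[LHS]/((g \o h a) y) g_h. Qed.

Lemma projector_g_projector x : P (g (P x)) = P (g x).
Proof. by rewrite [P x]/projector g_hE// projector_h. Qed.

Lemma A_g_projector x : A (g (P x)) * A x = A (g x).
Proof. by rewrite /projector g_hE// A_h// divfK ?gt_eqF. Qed.

End representative_set.

Section normalized_transport.
Local Open Scope ereal_scope.
Context d (X : measurableType d) (R : realType).
Variables (mu : {sigma_finite_measure set X -> \bar R}) (A : X -> R).
Variables P g : X -> X.
Hypotheses (mu_neq0 : mu setT != 0) (A_gt0 : forall x, (0 < A x)%R)
  (mA : measurable_fun setT A) (mP : measurable_fun setT P)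
  (mg : measurable_fun setT g)
  (A_int : \int[mu]_x (A x)%:E < +oo) (Ag_int : \int[mu]_x (A (g x))%:E < +oo)
  (PgP : forall x, P (g (P x)) = P (g x))
  (AgP : forall x, (A (g (P x)) * A x = A (g x))%R).
Local Notation nu := (pushforward (normalized mu A) P).

Let A_ge0 x : (0 <= A x)%R. Proof. exact: ltW. Qed.

Let mAE : measurable_fun setT (EFin \o A).
Proof. exact/measurable_EFinP. Qed.

Let mAgE : measurable_fun setT (EFin \o (A \o g)).
Proof. exact/measurable_EFinP/measurableT_comp. Qed.

Let intA : mu.-integrable setT (EFin \o A).
Proof.
apply/integrableP; split => //.
by under eq_integral do rewrite gee0_abs ?lee_fin//.
Qed.

Lemma integral_normalized_transport D : measurable D ->
  \int[nu]_(y in D) (A (g y))%:E =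
  ((fine (\int[mu]_x (A x)%:E))^-1)%:E * \int[mu]_(x in P @^-1` D) (A (g x))%:E.
Proof.
move=> mD; rewrite (integral_pushforward_normalized intA A_ge0)//; last 2 first.
- exact: measurable_funTS mAgE.
- by move=> y; rewrite lee_fin.
by congr (_ * _); apply: eq_integral => x _; rewrite -EFinM AgP.
Qed.

Lemma pushforward_normalized_comp :
  0 < \int[nu]_y (A (g y))%:E < +oo /\
  forall S, measurable S ->
    pushforward (normalized (pushforward mu g) A) P S =
    pushforward (normalized nu (A \o g)) (P \o g) S.
Proof.
set I := \int[mu]_x (A x)%:E; set J := \int[mu]_x (A (g x))%:E.
have fineI_gt0 : (0 < fine I)%R.
  by rewrite fine_gt0// A_int andbT integral_gt0.
have fineJ_gt0 : (0 < fine J)%R.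
  by rewrite fine_gt0// Ag_int andbT integral_gt0//; exact: measurableT_comp.
have intC : \int[nu]_y (A (g y))%:E = ((fine I)^-1 * fine J)%:E.
  rewrite integral_normalized_transport// preimage_setT EFinM fineK//.
  by rewrite ge0_fin_numE ?Ag_int// integral_ge0// => x _; rewrite lee_fin.
split; first by rewrite intC lte_fin ltry mulr_gt0 ?invr_gt0.
move=> S mS; have mPS := measurable_preimage mP mS.
rewrite [LHS]/pushforward [RHS]/pushforward /normalized intC.
rewrite integral_normalized_transport; last first.
  by apply: measurable_preimage mS; exact: measurableT_comp.
rewrite !ge0_integral_pushforward//; last 3 first.
- by move=> y _; rewrite lee_fin.
- exact: measurable_funTS mAE.
- by move=> y _; rewrite lee_fin.
have -> : P @^-1` ((P \o g) @^-1` S) = g @^-1` (P @^-1` S).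
  by apply/funext => x; rewrite /preimage /= PgP.
have kE : ((fine I)^-1 * ((fine I)^-1 * fine J)^-1 = (fine J)^-1)%R.
  by rewrite invfM invrK mulrA mulVf ?gt_eqF ?mul1r.
by rewrite preimage_setT -/J /= (muleC _%:E) -muleA -EFinM kE.
Qed.

End normalized_transport.

Theorem theorem2 (d : measure_display) (X : measurableType d) (R : realType)
  (Phi : R -> X -> X) (mu : probability X R)
  (h : R -> X -> X) (G : set (X -> X))
  (Y : set X) (A : X -> R) (g : X -> X)
  (* flow *)
  (Phi_bij : forall t, bijective (Phi t))
  (Phi_meas : forall t, measurable_fun setT (Phi t))
  (Phi_add : forall t1 t2, Phi t1 \o Phi t2 = Phi (t1 + t2))
  (Phi_joint : measurable_fun setT (fun p : X * R => Phi p.2 p.1))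
  (* mu invariant *)
  (mu_inv : forall t S, measurable S -> mu (Phi t @^-1` S) = mu S)
  (* the maps h^a, a > 0 *)
  (h_bij : forall a, 0 < a -> bijective (h a))
  (h_meas : forall a, 0 < a -> measurable_fun setT (h a))
  (h_mul : forall a1 a2, 0 < a1 -> 0 < a2 -> h a1 \o h a2 = h (a1 * a2))
  (* G : a group under composition of bijective measurable maps *)
  (G_bij : forall f, G f -> bijective f)
  (G_meas : forall f, G f -> measurable_fun setT f)
  (G_id : G id)
  (G_comp : forall f1 f2, G f1 -> G f2 -> G (f1 \o f2))
  (G_inv : forall f, G f -> exists f', G f' /\ cancel f f' /\ cancel f' f)
  (* commutation relations *)
  (Phi_G : forall t f, G f -> Phi t \o f = f \o Phi t)
  (G_h : forall a f, 0 < a -> G f -> f \o h a = h a \o f)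
  (Phi_h : forall t a, 0 < a -> Phi t \o h a = h a \o Phi (t / a))
  (* representative set Y with function A *)
  (A_pos : forall x, 0 < A x)
  (A_rep : forall x, Y (h (A x) x))
  (A_uniq : forall x a, 0 < a -> Y (h a x) -> a = A x)
  (A_meas : measurable_fun setT A)
  (A_int : (\int[mu]_x (A x)%:E < +oo)%E)
  (* measurability of the projector P (implicit in the push-forward P_# ) *)
  (P_meas : measurable_fun setT (fun x => h (A x) x))
  (* g in G with \int A o g dmu < oo *)
  (gG : G g)
  (Ag_int : (\int[mu]_x (A (g x))%:E < +oo)%E) :
  let P := fun x => h (A x) x in
  let nu := pushforward (normalized mu A) P in
  let gstar_nu := pushforward (normalized (pushforward mu g) A) P in
  let C := fun y => A (g y) in
  (0 < \int[nu]_y (C y)%:E < +oo)%E /\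
  forall S, measurable S -> gstar_nu S = pushforward (normalized nu C) (P \o g) S.
Proof.
move=> P nu gstar_nu C.
have mu_neq0 : mu setT != 0 by rewrite probability_setT oner_neq0.
have g_h a : 0 < a -> g \o h a = h a \o g by move=> a_gt0; exact: G_h.
exact: (pushforward_normalized_comp mu_neq0 A_pos A_meas P_meas (G_meas _ gG)
  A_int Ag_int (projector_g_projector h_mul A_pos A_rep A_uniq g_h)
  (A_g_projector h_mul A_pos A_rep A_uniq g_h)).
Qed.
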